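(* Let $\alpha\ge0$, $\beta\ge0$, $\gamma>0$, $T>0$ satisfy $\gamma/2+\beta+T\alpha>1/T$. Then for every $\theta\in(0,2\pi)$ both roots $\lambda\in\mathbb C$ of $$\lambda^2+\gamma\Big(\frac{1-e^{i\theta}}{T}+\lambda\Big)+\beta\lambda(1-e^{i\theta})+\alpha(2-e^{i\theta}-e^{-i\theta})=0$$ have strictly negative real part, while for $\theta=0$ the roots are $0$ and $-\gamma$. Equivalently, with $c=\cos\theta$, $s=\sin\theta$, for all $c\in[-1,1)$ with $s^2=1-c^2$, $$(\beta(1-c)+\gamma)\Big[(\beta(1-c)+\gamma)(1-c)\Big(\frac{\gamma}{T}+2\alpha\Big)+\frac{\beta\gamma}{T}s^2\Big]-\Big(\frac{\gamma}{T}\Big)^2s^2>0.$$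
   Context: This is the characteristic equation of the deterministic linear car-following system $\ddot s_n=\gamma\big(\frac{s_{n+1}-s_n}{T}-\dot s_n\big)+\beta(\dot s_{n+1}-\dot s_n)+\alpha(s_{n+1}-2s_n+s_{n-1})$ on a ring, obtained from the ansatz $s_n=\xi e^{\lambda t}e^{in\theta}$, $\theta=2\pi k/N$. *)

From Stdlib Require Import Reals.
From Coquelicot Require Import Coquelicot.
Open Scope R_scope.

Definition cexpi (theta : R) : Complex.C := (cos theta, sin theta).

Definition char_poly (alpha beta gamma T theta : R) (lam : Complex.C) : Complex.C :=
  (lam * lam
   + RtoC gamma * ((1 - cexpi theta) / RtoC T + lam)
   + RtoC beta * lam * (1 - cexpi theta)
   + RtoC alpha * (2 - cexpi theta - cexpi (- theta)))%C.

(* Writing lambda = x + i y, c = cos theta, s = sin theta, u = 1 - c and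
   k = gamma / T, the characteristic equation splits into the real system
     (Re)  x^2 + B x + u (k + 2 alpha) = y^2 - beta s y,
     (Im)  y (2 x + B) = s (beta x + k),        where B = gamma + beta u.
   Multiplying (Re) by (2x + B)^2 and substituting (Im) eliminates y; for
   x >= 0 the two sides of the resulting identity are bounded by
   u (k + 2 alpha) B^2 and s^2 k (k - beta B), so a root with x >= 0 is
   impossible as soon as the Hurwitz-type margin
     B (B u (k + 2 alpha) + beta k s^2) - k^2 s^2
   is positive.  On the circle s^2 = u (2 - u) this margin equals u times a
   quantity that is nondecreasing in u and, at u = 0, is a positive multiple
   of gamma/2 + beta + T alpha - 1/T.  This gives the third claim, and with
   the elimination argument the first; the case theta = 0 is the
   factorisation lambda (lambda + gamma). *)
From Stdlib Require Import Reals Lra Psatz.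
From Coquelicot Require Import Coquelicot.
Open Scope R_scope.

Lemma char_poly_parts (alpha beta gamma T theta x y : R) : T <> 0 ->
  char_poly alpha beta gamma T theta (x, y) =
  (x * x - y * y + gamma * ((1 - cos theta) / T + x)
     + beta * (x * (1 - cos theta) + y * sin theta) + alpha * (2 - 2 * cos theta),
   2 * x * y + gamma * (- sin theta / T + y)
     + beta * (y * (1 - cos theta) - x * sin theta)).
Proof.
  intros HT. unfold char_poly, cexpi. rewrite cos_neg, sin_neg.
  apply injective_projections; simpl; field; exact HT.
Qed.

Lemma char_poly_root_system (alpha beta gamma T theta x y : R) : T <> 0 ->
  char_poly alpha beta gamma T theta (x, y) = 0%C ->
  let u := 1 - cos theta in let s := sin theta in
  x * x + (gamma + beta * u) * x + u * (gamma / T + 2 * alpha)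
    = y * y - beta * s * y /\
  y * (2 * x + (gamma + beta * u)) = s * (beta * x + gamma / T).
Proof.
  intros HT Hroot u s. rewrite char_poly_parts in Hroot by exact HT.
  apply pair_equal_spec in Hroot as [Hre Him]. unfold u, s.
  split.
  - apply (Rplus_eq_reg_r (- (y * y - beta * sin theta * y))).
    rewrite Rplus_opp_r, <- Hre. field. exact HT.
  - apply (Rplus_eq_reg_r (- (sin theta * (beta * x + gamma / T)))).
    rewrite Rplus_opp_r, <- Him. field. exact HT.
Qed.

Lemma system_solution_negative (b k q B s x y : R) :
  0 <= b -> 0 <= q -> 0 < B ->
  B * (B * q + b * k * s ^ 2) - k ^ 2 * s ^ 2 > 0 ->
  x * x + B * x + q = y * y - b * s * y ->
  y * (2 * x + B) = s * (b * x + k) ->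
  x < 0.
Proof.
  intros Hb Hq HB Hmargin Hre Him.
  destruct (Rlt_or_le x 0) as [Hneg | Hx]; [exact Hneg | exfalso].
  assert (Helim : (x * x + B * x + q) * ((2 * x + B) * (2 * x + B))
               = s ^ 2 * (k * (k - b * B) - b * x * (b * x + b * B))).
  { rewrite Hre.
    transitivity ((y * (2 * x + B)) * (y * (2 * x + B))
                  - b * s * (2 * x + B) * (y * (2 * x + B))); [ring |].
    rewrite Him. ring. }
  assert (Hlower : q * (B * B) <= (x * x + B * x + q) * ((2 * x + B) * (2 * x + B))).
  { apply Rmult_le_compat; nra. }
  assert (Hupper : s ^ 2 * (k * (k - b * B) - b * x * (b * x + b * B))
                <= s ^ 2 * (k * (k - b * B))).
  { assert (Hs2 : 0 <= s ^ 2) by nra.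
    assert (Hbx : 0 <= b * x * (b * x + b * B)) by
      (apply Rmult_le_pos; nra).
    nra. }
  nra.
Qed.

(* On the circle s^2 = u (2 - u), the margin is u times a quantity whose value
   at u = 0 is  g^2 (k + 2a) + 2 g b k - 2 k^2  and which grows with u. *)
Lemma margin_on_circle_pos (a b g k u : R) :
  0 <= a -> 0 <= b -> 0 < g -> 0 < k -> 0 < u ->
  g * g * (k + 2 * a) + 2 * g * b * k > 2 * k * k ->
  (g + b * u) * ((g + b * u) * u * (k + 2 * a) + b * k * (u * (2 - u)))
    - k ^ 2 * (u * (2 - u)) > 0.
Proof.
  intros Ha Hb Hg Hk Hu Hcond.
  assert (Hslope : 0 <= g * b * k + 4 * g * a * b + 2 * a * b * b * u
                     + 2 * b * b * k + k * k).
  { assert (0 <= g * b * k) by (apply Rmult_le_pos; nra).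
    assert (0 <= g * a * b) by (apply Rmult_le_pos; nra).
    assert (0 <= a * b * b * u) by (apply Rmult_le_pos; nra).
    nra. }
  replace ((g + b * u) * ((g + b * u) * u * (k + 2 * a) + b * k * (u * (2 - u)))
           - k ^ 2 * (u * (2 - u)))
    with (u * ((g * g * (k + 2 * a) + 2 * g * b * k - 2 * k * k)
               + u * (g * b * k + 4 * g * a * b + 2 * a * b * b * u
                      + 2 * b * b * k + k * k))) by ring.
  apply Rmult_lt_0_compat; nra.
Qed.

(* The stability hypothesis, rescaled by 2 gamma^2 / T, is the value of the
   margin factor at u = 0. *)
Lemma stability_condition_rescaled (alpha beta gamma T : R) :
  0 < gamma -> 0 < T -> gamma / 2 + beta + T * alpha > 1 / T ->
  gamma * gamma * (gamma / T + 2 * alpha) + 2 * gamma * beta * (gamma / T)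
    > 2 * (gamma / T) * (gamma / T).
Proof.
  intros Hg HT Hcond.
  assert (Hscale : 0 < 2 * gamma * gamma / T) by
    (apply Rdiv_lt_0_compat; nra).
  replace (gamma * gamma * (gamma / T + 2 * alpha) + 2 * gamma * beta * (gamma / T))
    with (2 * gamma * gamma / T * (gamma / 2 + beta + T * alpha)) by (field; lra).
  replace (2 * (gamma / T) * (gamma / T)) with (2 * gamma * gamma / T * (1 / T))
    by (field; lra).
  apply Rmult_lt_compat_l; lra.
Qed.

Lemma margin_pos (alpha beta gamma T c s : R) :
  0 <= alpha -> 0 <= beta -> 0 < gamma -> 0 < T ->
  gamma / 2 + beta + T * alpha > 1 / T ->
  -1 <= c < 1 -> s ^ 2 = 1 - c ^ 2 ->
  (beta * (1 - c) + gamma) *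
    ((beta * (1 - c) + gamma) * (1 - c) * (gamma / T + 2 * alpha)
     + beta * gamma / T * s ^ 2)
  - (gamma / T) ^ 2 * s ^ 2 > 0.
Proof.
  intros Ha Hb Hg HT Hcond Hc Hs.
  assert (Hk : 0 < gamma / T) by (apply Rdiv_lt_0_compat; assumption).
  pose proof (margin_on_circle_pos alpha beta gamma (gamma / T) (1 - c)
                 Ha Hb Hg Hk ltac:(lra)
                 (stability_condition_rescaled alpha beta gamma T Hg HT Hcond)) as Hpos.
  replace (1 - c ^ 2) with ((1 - c) * (2 - (1 - c))) in Hs by ring.
  rewrite Hs. unfold Rdiv in *. lra.
Qed.

Lemma cos_lt_1_on_open_period (theta : R) : 0 < theta < 2 * PI -> cos theta < 1.
Proof.
  intros Htheta.
  assert (Hsin : 0 < sin (theta / 2)) by (apply sin_gt_0; lra).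
  replace theta with (2 * (theta / 2)) by field.
  rewrite cos_2a_sin. nra.
Qed.

Lemma char_poly_at_0 (alpha beta gamma T : R) (lam : C) :
  char_poly alpha beta gamma T 0 lam = (lam * (lam + RtoC gamma))%C.
Proof.
  assert (Hone : cexpi 0 = 1%C) by (unfold cexpi; rewrite cos_0, sin_0; reflexivity).
  unfold char_poly, Cdiv. rewrite Ropp_0, Hone. ring.
Qed.

Theorem mainTheorem6 (alpha beta gamma T : R) :
  0 <= alpha -> 0 <= beta -> 0 < gamma -> 0 < T ->
  gamma / 2 + beta + T * alpha > 1 / T ->
  (forall theta : R, 0 < theta < 2 * PI ->
     forall lam : Complex.C, char_poly alpha beta gamma T theta lam = 0%C ->
       Re lam < 0)
  /\
  (forall lam : Complex.C,
     char_poly alpha beta gamma T 0 lam = 0%C <-> (lam = 0%C \/ lam = RtoC (- gamma)))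
  /\
  (forall c s : R, -1 <= c < 1 -> s ^ 2 = 1 - c ^ 2 ->
     (beta * (1 - c) + gamma) *
       ((beta * (1 - c) + gamma) * (1 - c) * (gamma / T + 2 * alpha)
        + beta * gamma / T * s ^ 2)
     - (gamma / T) ^ 2 * s ^ 2 > 0).
Proof.
  intros Ha Hb Hg HT Hcond.
  split; [| split].
  - intros theta Htheta [x y] Hroot.
    destruct (char_poly_root_system alpha beta gamma T theta x y ltac:(lra) Hroot)
      as [Hre Him].
    assert (Hc : -1 <= cos theta < 1) by
      (split; [apply COS_bound | exact (cos_lt_1_on_open_period theta Htheta)]).
    assert (Hs : sin theta ^ 2 = 1 - cos theta ^ 2) by
      (pose proof (sin2_cos2 theta); unfold Rsqr in *; lra).
    pose proof (margin_pos alpha beta gamma T (cos theta) (sin theta)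
                      Ha Hb Hg HT Hcond Hc Hs) as Hmargin.
    assert (Hu : 0 < 1 - cos theta) by lra.
    assert (Hk : 0 < gamma / T) by (apply Rdiv_lt_0_compat; assumption).
    apply (system_solution_negative beta (gamma / T)
             ((1 - cos theta) * (gamma / T + 2 * alpha))
             (gamma + beta * (1 - cos theta)) (sin theta) x y Hb).
    + apply Rmult_le_pos; lra.
    + nra.
    + unfold Rdiv in *. nra.
    + lra.
    + exact Him.
  - intros lam. rewrite char_poly_at_0. split.
    + intros Hzero. destruct (Ceq_dec lam 0) as [Hlam | Hlam]; [left; exact Hlam | right].
      destruct (Ceq_dec (lam + RtoC gamma) 0) as [Hsum | Hsum].
      * transitivity ((lam + RtoC gamma) - RtoC gamma)%C; [ring |].
        rewrite Hsum, RtoC_opp. ring.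
      * exfalso. exact (Cmult_neq_0 _ _ Hlam Hsum Hzero).
    + intros [-> | ->]; [ring | rewrite RtoC_opp; ring].
  - intros c s. exact (margin_pos alpha beta gamma T c s Ha Hb Hg HT Hcond).
Qed.
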